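(* Let $G$ be a group with generating set $S$ not containing the identity, and let $d_C$ be the cardinal metric on $G$ with respect to $S$. Then $\{L_a\circ\tau : a\in G,\ \tau\in\mathrm{Aut}(G,S)\}\subseteq \mathrm{Iso}(G,d_C)$, where $L_a(g)=ag$, $\mathrm{Aut}(G,S)$ is the group of automorphisms $\tau$ of $G$ with $\tau(S)=S$, and $\mathrm{Iso}(G,d_C)$ is the set of isometries of $(G,d_C)$ onto itself.
   Context: The cardinal norm is $\|x\| = \min\{|A| : A\subseteq S,\ x\in\langle A\rangle\}$, where $\langle A\rangle$ is the subgroup generated by $A$, and $d_C(g,h)=\|g^{-1}h\|$. *)

From Stdlib Require Import List ClassicalEpsilon.
Import ListNotations.

Record Group := {
  carrier :> Type;
  gmul : carrier -> carrier -> carrier;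
  gone : carrier;
  ginv : carrier -> carrier;
  gmulA : forall x y z, gmul x (gmul y z) = gmul (gmul x y) z;
  gmul1l : forall x, gmul gone x = x;
  gmul1r : forall x, gmul x gone = x;
  gmulVl : forall x, gmul (ginv x) x = gone;
  gmulVr : forall x, gmul x (ginv x) = gone
}.

Arguments gmul {g}.
Arguments gone {g}.
Arguments ginv {g}.

Section Defs.
Variable G : Group.

Definition is_subgroup (H : G -> Prop) : Prop :=
  H gone /\ (forall x y, H x -> H y -> H (gmul x y)) /\
  (forall x, H x -> H (ginv x)).

Definition gen (A : G -> Prop) (x : G) : Prop :=
  forall H, is_subgroup H -> (forall a, A a -> H a) -> H x.

Definition generates (S : G -> Prop) : Prop := forall x : G, gen S x.

Definition card_witness (S : G -> Prop) (x : G) (n : nat) : Prop :=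
  exists A : list G, NoDup A /\ length A = n /\ (forall a, In a A -> S a) /\
    gen (fun a => In a A) x.

Definition is_card_norm (S : G -> Prop) (x : G) (n : nat) : Prop :=
  card_witness S x n /\ forall m, card_witness S x m -> n <= m.

Definition card_norm (S : G -> Prop) (x : G) : nat :=
  epsilon (inhabits 0) (fun n => is_card_norm S x n).

Definition card_dist (S : G -> Prop) (g h : G) : nat :=
  card_norm S (gmul (ginv g) h).

Definition is_isometry (S : G -> Prop) (f : G -> G) : Prop :=
  (forall y, exists x, f x = y) /\
  (forall g h, card_dist S (f g) (f h) = card_dist S g h).

Definition in_Aut_S (S : G -> Prop) (tau : G -> G) : Prop :=
  (forall x y, tau (gmul x y) = gmul (tau x) (tau y)) /\
  (forall x y, tau x = tau y -> x = y) /\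
  (forall y, exists x, tau x = y) /\
  (forall s, S s -> S (tau s)) /\
  (forall s, S s -> exists t, S t /\ tau t = s).

End Defs.

(* An automorphism preserving S maps every finite subset A of S with x in <A>
   to a subset of S of the same size whose span contains the image of x, and
   conversely through preimages; so it preserves the cardinal norm.  A left
   translation leaves every g^-1 h unchanged. *)
From Stdlib Require Import List FinFun FunctionalExtensionality PropExtensionality.
Import ListNotations.

Lemma ginv_mul (G : Group) (x y : G) : ginv (gmul x y) = gmul (ginv y) (ginv x).
Proof.
  rewrite <- (gmul1r G (gmul (ginv y) (ginv x))), <- (gmulVr G (gmul x y)).
  rewrite !gmulA, <- (gmulA G _ (ginv x) x), gmulVl, gmul1r, gmulVl, gmul1l.
  reflexivity.
Qed.

Lemma list_lift {A B : Type} (P : A -> Prop) (f : A -> B) (l : list B) :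
  (forall b, In b l -> exists a, P a /\ f a = b) ->
  exists l', map f l' = l /\ forall a, In a l' -> P a.
Proof.
  induction l as [|b l IH]; intros Hl.
  - exists []. split; [reflexivity | intros a []].
  - destruct (Hl b (or_introl eq_refl)) as [a [Pa <-]].
    destruct IH as [l' [<- Hl']]; [intros c Hc; apply Hl; right; exact Hc|].
    exists (a :: l'). split; [reflexivity|].
    intros a' [<- | Ha']; auto.
Qed.

Section Morphism.
Variables G H : Group.
Variable f : G -> H.
Hypothesis f_mul : forall x y, f (gmul x y) = gmul (f x) (f y).

Lemma morph1 : f gone = gone.
Proof.
  assert (E : f gone = gmul (f gone) (f gone)) by (rewrite <- f_mul, gmul1l; reflexivity).
  rewrite <- (gmul1l H (f gone)), <- (gmulVl H (f gone)), <- gmulA, <- E.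
  reflexivity.
Qed.

Lemma morphV x : f (ginv x) = ginv (f x).
Proof.
  rewrite <- (gmul1r H (f (ginv x))), <- (gmulVr H (f x)), gmulA, <- f_mul.
  rewrite gmulVl, morph1, gmul1l. reflexivity.
Qed.

Lemma subgroup_preim (K : H -> Prop) :
  is_subgroup H K -> is_subgroup G (fun x => K (f x)).
Proof.
  intros [K1 [KM KV]]. split; [|split].
  - rewrite morph1. exact K1.
  - intros x y Kx Ky. rewrite f_mul. auto.
  - intros x Kx. rewrite morphV. auto.
Qed.

Lemma subgroup_image (K : G -> Prop) :
  is_subgroup G K -> is_subgroup H (fun y => exists x, K x /\ f x = y).
Proof.
  intros [K1 [KM KV]]. split; [|split].
  - exists gone. split; [exact K1 | exact morph1].
  - intros _ _ [x [Kx <-]] [y [Ky <-]]. exists (gmul x y). auto.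
  - intros _ [x [Kx <-]]. exists (ginv x). split; [auto | apply morphV].
Qed.

Lemma gen_morph (A : G -> Prop) (B : H -> Prop) x :
  (forall a, A a -> B (f a)) -> gen G A x -> gen H B (f x).
Proof.
  intros AB Ax K HK BK.
  apply (Ax (fun x => K (f x))); [apply subgroup_preim; exact HK | auto].
Qed.

Hypothesis f_inj : forall x y, f x = f y -> x = y.

Lemma gen_morph_inj (A : G -> Prop) (B : H -> Prop) x :
  (forall b, B b -> exists a, A a /\ f a = b) -> gen H B (f x) -> gen G A x.
Proof.
  intros BA Bx K HK AK.
  destruct (Bx _ (subgroup_image K HK)) as [y [Ky Exy]].
  - intros b Bb. destruct (BA b Bb) as [a [Aa <-]]. eauto.
  - rewrite (f_inj _ _ Exy) in Ky. exact Ky.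
Qed.

Lemma card_witness_morph (S : G -> Prop) (T : H -> Prop) x n :
  (forall s, S s -> T (f s)) ->
  card_witness G S x n -> card_witness H T (f x) n.
Proof.
  intros ST [A [NDA [lenA [AS Ax]]]].
  exists (map f A). split; [|split; [|split]].
  - apply Injective_map_NoDup; [exact f_inj | exact NDA].
  - rewrite length_map. exact lenA.
  - intros b Hb. apply in_map_iff in Hb. destruct Hb as [a [<- Ha]]. auto.
  - apply (gen_morph (fun a => In a A)); [apply in_map | exact Ax].
Qed.

Lemma card_witness_morph_inv (S : G -> Prop) (T : H -> Prop) x n :
  (forall t, T t -> exists s, S s /\ f s = t) ->
  card_witness H T (f x) n -> card_witness G S x n.
Proof.
  intros TS [B [NDB [lenB [BT Bx]]]].
  destruct (list_lift S f B) as [A [<- AS]]; [auto|].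
  exists A. split; [|split; [|split]].
  - exact (NoDup_map_inv f A NDB).
  - rewrite <- lenB, length_map. reflexivity.
  - exact AS.
  - apply (gen_morph_inj (fun a => In a A) (fun b => In b (map f A))); [|exact Bx].
    intros b Hb. apply in_map_iff in Hb. destruct Hb as [a [<- Ha]]. eauto.
Qed.

End Morphism.

Lemma card_norm_ext (G H : Group) (S : G -> Prop) (T : H -> Prop) x y :
  (forall n, card_witness G S x n <-> card_witness H T y n) ->
  card_norm G S x = card_norm H T y.
Proof.
  intros W. unfold card_norm.
  replace (fun n => is_card_norm H T y n) with (fun n => is_card_norm G S x n);
    [reflexivity|].
  apply functional_extensionality; intro n. apply propositional_extensionality.
  unfold is_card_norm. split; intros [Wn Min]; split;
    try (apply W; exact Wn); intros m Wm; apply Min, W, Wm.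
Qed.

Lemma card_norm_aut (G : Group) (S : G -> Prop) tau x :
  in_Aut_S G S tau -> card_norm G S (tau x) = card_norm G S x.
Proof.
  intros [tau_mul [tau_inj [_ [tauS tauS']]]].
  apply card_norm_ext. intro n. split.
  - apply (card_witness_morph_inv G G tau tau_mul tau_inj S S x n tauS').
  - apply (card_witness_morph G G tau tau_mul tau_inj S S x n tauS).
Qed.

Lemma card_dist_translate (G : Group) (S : G -> Prop) (a g h : G) :
  card_dist G S (gmul a g) (gmul a h) = card_dist G S g h.
Proof.
  unfold card_dist. rewrite ginv_mul, <- gmulA, (gmulA G (ginv a)), gmulVl, gmul1l.
  reflexivity.
Qed.

Lemma card_dist_aut (G : Group) (S : G -> Prop) tau g h :
  in_Aut_S G S tau -> card_dist G S (tau g) (tau h) = card_dist G S g h.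
Proof.
  intros Ht. pose proof Ht as [tau_mul _]. unfold card_dist.
  rewrite <- (morphV G G tau tau_mul), <- tau_mul. apply card_norm_aut, Ht.
Qed.

Theorem mainTheorem12 (G : Group) (S : G -> Prop)
  (hgen : generates G S) (h1 : ~ S gone) :
  forall (a : G) (tau : G -> G), in_Aut_S G S tau ->
    is_isometry G S (fun g => gmul a (tau g)).
Proof.
  intros a tau Ht. pose proof Ht as [_ [_ [tau_surj _]]]. split.
  - intro y. destruct (tau_surj (gmul (ginv a) y)) as [x Hx]. exists x.
    rewrite Hx, gmulA, gmulVr, gmul1l. reflexivity.
  - intros g h. rewrite card_dist_translate. apply card_dist_aut, Ht.
Qed.
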